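(* Let $G$ be a finite $p$-group ($p$ a prime) and $f\in\mathrm{Aut}(G)$. If $Q=\mathcal{Q}(G,f)$ is a latin, involutory, simply connected quandle, then $G$ is cyclic.
   Context: A quandle is a set $Q$ with a binary operation $*$ such that every left translation $L_x:y\mapsto x*y$ is bijective, $x*(y*z)=(x*y)*(x*z)$ and $x*x=x$. $\mathcal{Q}(G,f)$ is $G$ with $x*y=xf(x^{-1}y)$. $Q$ is latin if every right translation $y\mapsto y*x$ is bijective, involutory if $x*(x*y)=y$ for all $x,y$, and connected if $\langle L_x:x\in Q\rangle$ is transitive. For a set $S$, a quandle cocycle with values in $\mathrm{Sym}_S$ is $\theta:Q\times Q\to\mathrm{Sym}_S$ with $\theta_{x*y,x*z}\theta_{x,z}=\theta_{x,y*z}\theta_{y,z}$ and $\theta_{x,x}=1$; it is cohomologous to the trivial cocycle if there is $\gamma:Q\to\mathrm{Sym}_S$ with $\theta_{x,y}=\gamma_{x*y}\gamma_y^{-1}$ for all $x,y$. $Q$ is simply connected if it is connected and, for every set $S$, every such cocycle is cohomologous to the trivial cocycle. *)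

From HB Require Import structures.
From mathcomp Require Import all_boot all_fingroup all_solvable.
Set Implicit Arguments. Unset Strict Implicit. Unset Printing Implicit Defensive.

Local Open Scope group_scope.

Section QuandleDefs.
Variable gT : finGroupType.
Variable f : {perm gT}.

Definition qop (x y : gT) : gT := x * f (x^-1 * y).

Lemma qop_inj x : injective (qop x).
Proof.
by move=> y z; rewrite /qop => /mulgI /perm_inj /mulgI.
Qed.

Definition Lperm (x : gT) : {perm gT} := perm (@qop_inj x).

Definition q_latin : Prop := forall x : gT, bijective (fun y => qop y x).

Definition q_involutory : Prop := forall x y : gT, qop x (qop x y) = y.

Definition q_connected : Prop :=
  [transitive <<[set Lperm x | x : gT]>>, on [set: gT] | 'P].

Definition q_cocycle (S : Type) (theta : gT -> gT -> S -> S) : Prop :=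
  [/\ forall x y, bijective (theta x y),
      forall x y z, theta (qop x y) (qop x z) \o theta x z
                    =1 theta x (qop y z) \o theta y z
    & forall x, theta x x =1 id].

Definition q_coboundary (S : Type) (theta : gT -> gT -> S -> S) : Prop :=
  exists gamma gammainv : gT -> S -> S,
    (forall x, cancel (gamma x) (gammainv x) /\ cancel (gammainv x) (gamma x))
    /\ forall x y, theta x y =1 gamma (qop x y) \o gammainv y.

Definition q_simply_connected : Prop :=
  q_connected /\
  forall (S : Type) (theta : gT -> gT -> S -> S),
    q_cocycle theta -> q_coboundary theta.

End QuandleDefs.

From HB Require Import structures.
From mathcomp Require Import all_boot all_fingroup all_solvable all_algebra.
From mathcomp Require Import mxabelem ring.
Set Implicit Arguments. Unset Strict Implicit. Unset Printing Implicit Defensive.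
Import GRing.Theory.

(* A latin involutory Q(G,f) is the core quandle of G: f is inversion, so
   x * y = x y^-1 x, and squaring is bijective, whence |G| is odd.  If G is not
   cyclic, its Frattini quotient has F_p-rank at least 2, giving homomorphisms
   c0, c1 : G -> F_p and a, b in G with w(a,b) = 1, where
   w(x,y) = c0 x c1 y - c1 x c0 y.  As c(x * y) = 2 c(x) - c(y) and w is
   alternating bilinear, s |-> s + w(x,y) is a cocycle with values in Sym(F_p).
   Its holonomy along the loop 1 -> b * 1 -> a * (b * 1) -> 1, closed up by
   latinity, is the translation by 2 w(a,b) <> 0, so it is not a coboundary. *)

Local Open Scope group_scope.

Lemma q_coboundary_loop3 (gT : finGroupType) (f : {perm gT}) (S : Type)
    (theta : gT -> gT -> S -> S) (x1 x2 x3 y0 y1 y2 : gT) :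
  q_coboundary f theta ->
  qop f x1 y0 = y1 -> qop f x2 y1 = y2 -> qop f x3 y2 = y0 ->
  theta x3 y2 \o theta x2 y1 \o theta x1 y0 =1 id.
Proof.
move=> [gam [gami [gK thE]]] <- <- y0E s /=.
have gamK x := proj1 (gK x); have gamiK x := proj2 (gK x).
by rewrite !thE /= !gamK y0E gamiK.
Qed.

Section CoreQuandle.

Variables (gT : finGroupType) (f : {perm gT}).

Lemma aut_latin_involutory_invg :
  f \in Aut [set: gT] -> q_latin f -> q_involutory f -> forall x, f x = x^-1.
Proof.
move=> Af lat inv z.
have fM : {in [set: gT] &, {morph f : x y / x * y}} := morphicP (Aut_morphic Af).
have fV x : f x^-1 = (f x)^-1 by rewrite -(autmE Af) morphV ?inE.
have ff y : f (f y) = y by have := inv 1 y; rewrite /qop !invg1 !mul1g.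
have [g _ gK] := lat 1.
by rewrite -(gK z) /qop mulg1 fM ?inE // ff fV invMg invgK.
Qed.

Hypothesis fV : forall x, f x = x^-1.

Lemma qop_core x y : qop f x y = x * y^-1 * x.
Proof. by rewrite /qop fV invMg invgK mulgA. Qed.

Lemma core_latin_odd_order : q_latin f -> odd #|gT|.
Proof.
move=> lat; apply: contraT; rewrite -dvdn2 -cardsT.
move=> /(Cauchy (isT : prime 2)) [x _ ox].
have [g gK _] := lat 1.
have xx : x * x = 1 by rewrite -{2}(expg1 x) -expgS -ox expg_order.
have : qop f x 1 = qop f 1 1 by rewrite !qop_core invg1 !mulg1 xx.
by move/(can_inj gK)=> x1; rewrite x1 order1 in ox.
Qed.

Section TranslationCocycle.
Local Open Scope ring_scope.

Variables (R : comPzRingType) (c0 c1 : gT -> R).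
Hypotheses (c0M : {morph c0 : x y / (x * y)%g >-> x + y})
           (c1M : {morph c1 : x y / (x * y)%g >-> x + y}).

Section Additive.

Variables (c : gT -> R) (cM : {morph c : x y / (x * y)%g >-> x + y}).

Lemma additive_unit : c 1%g = 0.
Proof. by apply: (@addrI _ (c 1%g)); rewrite -cM mulg1 addr0. Qed.

Lemma additive_qop_core x y : c (qop f x y) = 2%:R * c x - c y.
Proof.
have cV : c y^-1%g = - c y.
  by apply/eqP; rewrite -subr_eq0 opprK -cM mulVg additive_unit.
by rewrite qop_core !cM cV; ring.
Qed.

End Additive.

Definition coord_det (x y : gT) : R := c0 x * c1 y - c1 x * c0 y.

Definition translation_cocycle (x y : gT) (s : R) : R := s + coord_det x y.

Lemma translation_q_cocycle : q_cocycle f translation_cocycle.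
Proof.
rewrite /translation_cocycle /coord_det; split.
- by move=> x y; exists (fun s => s - coord_det x y) => s; rewrite ?addrK ?subrK.
- move=> x y z s /=.
  by rewrite !(additive_qop_core c0M) !(additive_qop_core c1M); ring.
- by move=> x s; rewrite mulrC subrr addr0.
Qed.

Lemma translation_not_q_coboundary (a b : gT) :
  2%:R * coord_det a b != 0 -> q_latin f -> ~ q_coboundary f translation_cocycle.
Proof.
move=> nz lat cob; pose y2 := qop f a (qop f b 1%g).
have [g _ gK] := lat y2.
have loop := q_coboundary_loop3 cob (erefl _) (erefl y2) (gK 1%g).
have y2E (c : gT -> R) :
    {morph c : x y / (x * y)%g >-> x + y} -> c y2 = 2%:R * c (g 1%g).
  move=> cM; apply/esym/subr0_eq.
  by rewrite -(additive_qop_core cM) gK additive_unit.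
suff nz0 : 2%:R * coord_det a b = 0 by rewrite nz0 eqxx in nz.
rewrite -[RHS](loop 0) /= /translation_cocycle /coord_det.
rewrite (y2E _ c0M) (y2E _ c1M) !(additive_qop_core c0M) !(additive_qop_core c1M).
by rewrite (additive_unit c0M) (additive_unit c1M); ring.
Qed.

End TranslationCocycle.

End CoreQuandle.

Lemma noncyclic_pgroup_coord_det (gT : finGroupType) (p : nat) :
  p.-group [set: gT] -> ~~ cyclic [set: gT] ->
  exists (c0 c1 : gT -> 'F_p) (a b : gT),
    [/\ {morph c0 : x y / x * y >-> (x + y)%R},
        {morph c1 : x y / x * y >-> (x + y)%R}
      & coord_det c0 c1 a b = 1%R].
Proof.
move=> pG ncyc; pose H := 'Phi([set: gT]).
have abelE := Phi_quotient_abelem pG; set E := (_ / _) in abelE.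
have ncE : ~~ cyclic E by apply: contra ncyc; apply: Phi_quotient_cyclic.
have ntE : E :!=: 1 by apply: contraNneq ncE => ->; apply: cyclic1.
rewrite (abelem_cyclic abelE) -ltnNge -(dim_abelemE abelE ntE) in ncE.
pose c x := abelem_rV abelE ntE (coset H x).
have cM : {morph c : x y / x * y >-> (x + y)%R}.
  have nH x : x \in 'N(H) by rewrite (subsetP (normal_norm (Phi_normal _))) ?inE.
  have EH x : coset H x \in E by rewrite mem_quotient ?inE.
  by move=> x y; rewrite /c morphM ?nH // abelem_rV_M ?EH.
have cK v : c (repr (rVabelem abelE ntE v)) = v by rewrite /c coset_reprK rVabelemK.
pose i1 := Ordinal ncE.
exists (fun x => c x 0 0)%R, (fun x => c x 0 i1)%R.
exists (repr (rVabelem abelE ntE (delta_mx 0 0)%R)).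
exists (repr (rVabelem abelE ntE (delta_mx 0 i1)%R)).
split; try by move=> x y; rewrite cM mxE.
by rewrite /coord_det !cK !mxE /= mulr1 mulr0 subr0.
Qed.

Theorem proposition4p6 (gT : finGroupType) (p : nat) (f : {perm gT}) :
  prime p -> (p.-group [set: gT])%g -> (f \in Aut [set: gT])%g ->
  q_latin f -> q_involutory f -> q_simply_connected f ->
  cyclic [set: gT].
Proof.
move=> p_pr pG Af lat inv [_ sc]; apply: contraT => ncyc.
have fV := aut_latin_involutory_invg Af lat inv.
have [c0 [c1 [a [b [c0M c1M ab1]]]]] := noncyclic_pgroup_coord_det pG ncyc.
have p_odd : odd p.
  have ntG : [set: gT] :!=: 1 by apply: contraNneq ncyc => ->; apply: cyclic1.
  have [_ p_dvd _] := pgroup_pdiv pG ntG.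
  by apply: dvdn_odd p_dvd _; rewrite cardsT (core_latin_odd_order fV).
have two_det_neq0 : (2%:R * coord_det c0 c1 a b != 0 :> 'F_p)%R.
  rewrite ab1 mulr1 -(dvdn_pcharf (pchar_Fp p_pr)) dvdn_prime2 //.
  by apply: contraL p_odd => /eqP ->.
case: (translation_not_q_coboundary fV c0M c1M two_det_neq0 lat).
exact: sc _ _ (translation_q_cocycle fV c0M c1M).
Qed.
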